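(* Let $\gamma\colon I\to\mathbb R^3$ be a curve parametrized by arc-length whose curvature is a nonzero constant $\kappa_0$, and suppose there exist $a_0,a_1\in\mathbb R$ with $a_1>0$ such that $|\gamma(s)|^2=(s+a_0)^2+a_1^2$ for all $s\in I$. Then there exists $q\in\mathbb R$, $q\neq0$, such that $\gamma''=q\,\gamma\times\gamma'$, i.e. $\gamma$ is a conformal trajectory of the radial vector field $V(x,y,z)=x\partial_x+y\partial_y+z\partial_z$.
   Context: $\times$ denotes the usual cross product of $\mathbb R^3$ and $|\cdot|$ the Euclidean norm. For a fixed real $q\neq0$, a conformal trajectory of a conformal vector field $V$ on $\mathbb R^3$ is a regular curve with $\gamma''=q\,V(\gamma)\times\gamma'$. *)

From Stdlib Require Import Reals.
From Coquelicot Require Import Coquelicot.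
Open Scope R_scope.

Definition R3 := (R * R * R)%type.
Definition mkR3 (x y z : R) : R3 := (x, y, z).
Definition v1 (v : R3) : R := fst (fst v).
Definition v2 (v : R3) : R := snd (fst v).
Definition v3 (v : R3) : R := snd v.
Definition dot (u v : R3) : R := v1 u * v1 v + v2 u * v2 v + v3 u * v3 v.
Definition norm3 (u : R3) : R := sqrt (dot u u).
Definition cross (u v : R3) : R3 :=
  mkR3 (v2 u * v3 v - v3 u * v2 v)
       (v3 u * v1 v - v1 u * v3 v)
       (v1 u * v2 v - v2 u * v1 v).
Definition scal3 (c : R) (u : R3) : R3 := mkR3 (c * v1 u) (c * v2 u) (c * v3 u).

Definition in_interval (a b : Rbar) (s : R) : Prop := Rbar_lt a s /\ Rbar_lt s b.

Definition dcurve (k : nat) (g : R -> R3) (s : R) : R3 :=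
  mkR3 (Derive_n (fun t => v1 (g t)) k s)
       (Derive_n (fun t => v2 (g t)) k s)
       (Derive_n (fun t => v3 (g t)) k s).

Definition smooth_on (a b : Rbar) (g : R -> R3) : Prop :=
  forall (n : nat) (s : R), in_interval a b s ->
    ex_derive_n (fun t => v1 (g t)) n s /\
    ex_derive_n (fun t => v2 (g t)) n s /\
    ex_derive_n (fun t => v3 (g t)) n s.

Definition arclength_param (a b : Rbar) (g : R -> R3) : Prop :=
  forall s, in_interval a b s -> norm3 (dcurve 1 g s) = 1.

Definition curvature (g : R -> R3) (s : R) : R :=
  norm3 (cross (dcurve 1 g s) (dcurve 2 g s)) / (norm3 (dcurve 1 g s)) ^ 3.

(* Differentiating |g|^2 = (s + a0)^2 + a1^2 gives g.g' = s + a0 and then g.g'' = 0;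
   together with g'.g'' = 0 (unit speed) this makes g'' orthogonal to g and g', whose
   cross product has constant squared length |g|^2 - (g.g')^2 = a1^2.  Hence
   g'' = (p / a1^2) g x g' with p = det(g, g', g''), and p^2 = |g''|^2 a1^2 = kappa0^2 a1^2.
   A differentiable function with constant nonzero square is constant on an interval,
   so q = p / a1^2 is a nonzero constant. *)

From Stdlib Require Import Reals Lra.
From Coquelicot Require Import Coquelicot.
Open Scope R_scope.

Definition add3 (u v : R3) : R3 := mkR3 (v1 u + v1 v) (v2 u + v2 v) (v3 u + v3 v).
Definition triple (u v w : R3) : R := dot u (cross v w).

Lemma dot_comm u v : dot u v = dot v u.
Proof. unfold dot; ring. Qed.

Lemma dot_self_ge0 u : 0 <= dot u u.
Proof. unfold dot; nra. Qed.

Lemma norm3_sqr u : norm3 u ^ 2 = dot u u.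
Proof. exact (pow2_sqrt _ (dot_self_ge0 u)). Qed.

Lemma dot_cross_self u v : dot (cross u v) (cross u v) = dot u u * dot v v - dot u v ^ 2.
Proof. unfold dot, cross, v1, v2, v3, mkR3; simpl; ring. Qed.

Lemma dot_cross_decomposition u v w :
  scal3 (dot (cross u v) (cross u v)) w =
  add3 (scal3 (triple u v w) (cross u v))
       (add3 (scal3 (dot v v * dot u w - dot u v * dot v w) u)
             (scal3 (dot u u * dot v w - dot u v * dot u w) v)).
Proof.
unfold add3, scal3, triple, dot, cross, v1, v2, v3, mkR3; simpl.
f_equal; [f_equal|]; ring.
Qed.

Lemma dot_scal3 c u v : dot (scal3 c u) v = c * dot u v.
Proof. unfold dot, scal3, v1, v2, v3, mkR3; simpl; ring. Qed.

Lemma dot_scal3r c u v : dot u (scal3 c v) = c * dot u v.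
Proof. unfold dot, scal3, v1, v2, v3, mkR3; simpl; ring. Qed.

Section OrthogonalToPlane.
Variables u v w : R3.
Hypotheses (uw0 : dot u w = 0) (vw0 : dot v w = 0)
           (uv_indep : dot (cross u v) (cross u v) <> 0).

Lemma orthogonal_eq_scal_cross :
  w = scal3 (triple u v w / dot (cross u v) (cross u v)) (cross u v).
Proof.
pose proof (dot_cross_decomposition u v w) as E.
rewrite uw0, vw0 in E.
revert E uv_indep. generalize (triple u v w) as t.
destruct w as [[w1 w2] w3], (cross u v) as [[c1 c2] c3].
unfold add3, scal3, dot, mkR3, v1, v2, v3; simpl; intros t E Hc.
injection E as E1 E2 E3.
f_equal; [f_equal|]; field_simplify_eq; auto; lra.
Qed.

Lemma triple_sqr_orthogonal :
  triple u v w ^ 2 = dot w w * dot (cross u v) (cross u v).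
Proof.
set (c := dot (cross u v) (cross u v)).
set (t := triple u v w).
rewrite orthogonal_eq_scal_cross, dot_scal3, dot_scal3r.
fold t c. field. exact uv_indep.
Qed.

End OrthogonalToPlane.

Definition is_derive3 (u : R -> R3) (s : R) (du : R3) : Prop :=
  is_derive (fun t => v1 (u t)) s (v1 du) /\
  is_derive (fun t => v2 (u t)) s (v2 du) /\
  is_derive (fun t => v3 (u t)) s (v3 du).

Lemma is_derive_mult_R (f h : R -> R) s df dh :
  is_derive f s df -> is_derive h s dh ->
  is_derive (fun t => f t * h t) s (df * h s + f s * dh).
Proof. intros Hf Hh. exact (is_derive_mult f h s df dh Hf Hh Rmult_comm). Qed.

Lemma is_derive_plus_R (f h : R -> R) s df dh :
  is_derive f s df -> is_derive h s dh ->
  is_derive (fun t => f t + h t) s (df + dh).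
Proof. exact (is_derive_plus f h s df dh). Qed.

Lemma is_derive_dot u w s du dw : is_derive3 u s du -> is_derive3 w s dw ->
  is_derive (fun t => dot (u t) (w t)) s (dot du (w s) + dot (u s) dw).
Proof.
intros (Hu1 & Hu2 & Hu3) (Hw1 & Hw2 & Hw3).
replace (dot du (w s) + dot (u s) dw) with
  ((v1 du * v1 (w s) + v1 (u s) * v1 dw) + (v2 du * v2 (w s) + v2 (u s) * v2 dw)
   + (v3 du * v3 (w s) + v3 (u s) * v3 dw)) by (unfold dot; ring).
unfold dot.
apply is_derive_plus_R; [apply is_derive_plus_R|]; apply is_derive_mult_R; assumption.
Qed.

Lemma is_derive_minor (f1 f2 h1 h2 : R -> R) s df1 df2 dh1 dh2 :
  is_derive f1 s df1 -> is_derive f2 s df2 ->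
  is_derive h1 s dh1 -> is_derive h2 s dh2 ->
  is_derive (fun t => f1 t * h2 t - f2 t * h1 t) s
    ((df1 * h2 s - df2 * h1 s) + (f1 s * dh2 - f2 s * dh1)).
Proof.
intros Hf1 Hf2 Hh1 Hh2.
replace ((df1 * h2 s - df2 * h1 s) + (f1 s * dh2 - f2 s * dh1)) with
  ((df1 * h2 s + f1 s * dh2) - (df2 * h1 s + f2 s * dh1)) by ring.
exact (is_derive_minus _ _ s _ _ (is_derive_mult_R _ _ s _ _ Hf1 Hh2)
                                 (is_derive_mult_R _ _ s _ _ Hf2 Hh1)).
Qed.

Lemma is_derive3_cross u w s du dw : is_derive3 u s du -> is_derive3 w s dw ->
  is_derive3 (fun t => cross (u t) (w t)) s (add3 (cross du (w s)) (cross (u s) dw)).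
Proof.
intros (Hu1 & Hu2 & Hu3) (Hw1 & Hw2 & Hw3).
split; [|split]; apply is_derive_minor; assumption.
Qed.

Lemma ex_derive_triple u v w s du dv dw :
  is_derive3 u s du -> is_derive3 v s dv -> is_derive3 w s dw ->
  ex_derive (fun t => triple (u t) (v t) (w t)) s.
Proof.
intros Hu Hv Hw. eexists.
exact (is_derive_dot _ _ s _ _ Hu (is_derive3_cross _ _ s _ _ Hv Hw)).
Qed.

Section OpenInterval.
Variables a b : Rbar.

Lemma in_interval_nonempty : Rbar_lt a b -> exists s, in_interval a b s.
Proof.
unfold in_interval.
destruct a as [x| |], b as [y| |]; simpl; intro H; try contradiction.
- exists ((x + y) / 2); simpl; lra.
- exists (x + 1); simpl; lra.
- exists (y - 1); simpl; lra.
- exists 0; simpl; tauto.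
Qed.

Lemma in_interval_locally s : in_interval a b s -> locally s (in_interval a b).
Proof. exact (open_and _ _ (open_Rbar_gt a) (open_Rbar_lt b) s). Qed.

Lemma in_interval_between s1 s2 x : in_interval a b s1 -> in_interval a b s2 ->
  Rmin s1 s2 <= x <= Rmax s1 s2 -> in_interval a b x.
Proof.
intros [H1 H2] [H3 H4] Hx.
assert (A : s1 <= x \/ s2 <= x) by (unfold Rmin in Hx; destruct Rle_dec; lra).
assert (B : x <= s1 \/ x <= s2) by (unfold Rmax in Hx; destruct Rle_dec; lra).
split.
- destruct A; [apply Rbar_lt_le_trans with s1 | apply Rbar_lt_le_trans with s2];
    simpl; auto; lra.
- destruct B; [apply Rbar_le_lt_trans with s1 | apply Rbar_le_lt_trans with s2];
    simpl; auto; lra.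
Qed.

Lemma is_derive_eq_on_interval (f h : R -> R) s df dh : in_interval a b s ->
  (forall t, in_interval a b t -> f t = h t) ->
  is_derive f s df -> is_derive h s dh -> df = dh.
Proof.
intros Hs Hfh Hf Hh.
apply is_derive_unique in Hh.
rewrite <- Hh. symmetry. apply is_derive_unique.
apply (is_derive_ext_loc f); [|exact Hf].
exact (filter_imp _ _ Hfh (in_interval_locally s Hs)).
Qed.

Lemma derive_zero_const_on_interval (f : R -> R) s1 s2 :
  (forall t, in_interval a b t -> is_derive f t 0) ->
  in_interval a b s1 -> in_interval a b s2 -> f s1 = f s2.
Proof.
intros Hf Hs1 Hs2.
assert (Hf' : forall x, Rmin s1 s2 <= x <= Rmax s1 s2 -> is_derive f x 0)
  by (intros x Hx; exact (Hf x (in_interval_between s1 s2 x Hs1 Hs2 Hx))).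
destruct (MVT_gen f s1 s2 (fun _ => 0)) as (c & _ & E).
- intros x Hx; apply Hf'; lra.
- intros x Hx. apply continuity_pt_filterlim, (@ex_derive_continuous R_AbsRing R_NormedModule).
  eexists; exact (Hf' x Hx).
- lra.
Qed.

Lemma sqr_const_nonzero_const_on_interval (f : R -> R) c s1 s2 :
  (forall t, in_interval a b t -> ex_derive f t) ->
  (forall t, in_interval a b t -> f t ^ 2 = c) -> c <> 0 ->
  in_interval a b s1 -> in_interval a b s2 -> f s1 = f s2.
Proof.
intros Hf Hc Hc0.
apply derive_zero_const_on_interval. intros t Ht.
destruct (Hf t Ht) as [d Hd].
assert (Hft : f t <> 0) by (intro E; apply Hc0; rewrite <- (Hc t Ht), E; ring).
assert (E : f t * d + f t * d = 0).
{ apply (is_derive_eq_on_interval (fun t => f t * f t) (fun _ => c) t _ _ Ht).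
  - intros x Hx. rewrite <- (Hc x Hx). ring.
  - replace (f t * d + f t * d) with (d * f t + f t * d) by ring.
    exact (is_derive_mult_R f f t d d Hd Hd).
  - exact (is_derive_const (V := R_NormedModule) c t). }
replace 0 with d; [exact Hd|].
apply (Rmult_eq_reg_l (2 * f t)); [lra|]. apply Rmult_integral_contrapositive; lra.
Qed.

End OpenInterval.

Lemma is_derive3_dcurve a b g k s : smooth_on a b g -> in_interval a b s ->
  is_derive3 (dcurve k g) s (dcurve (S k) g s).
Proof.
intros Hg Hs. destruct (Hg (S k) s Hs) as (H1 & H2 & H3).
split; [|split]; apply Derive_correct; assumption.
Qed.

Definition dcurve_triple (g : R -> R3) (s : R) : R :=
  triple (dcurve 0 g s) (dcurve 1 g s) (dcurve 2 g s).

(* [dcurve 0 g s] rebuilds [g s] from its components, so it is not convertible to [g s];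
   [dot] and [cross] only inspect components, which is all the final step needs. *)
Section RadialNormCurve.
Variables (a b : Rbar) (g : R -> R3) (kappa0 a0 a1 : R).
Hypotheses (g_smooth : smooth_on a b g) (g_arclength : arclength_param a b g)
  (g_curvature : forall s, in_interval a b s -> curvature g s = kappa0)
  (kappa0_neq0 : kappa0 <> 0) (a1_gt0 : 0 < a1)
  (g_norm : forall s, in_interval a b s -> norm3 (g s) ^ 2 = (s + a0) ^ 2 + a1 ^ 2).

Lemma derive_dot_dcurve i j (f : R -> R) s df : in_interval a b s ->
  (forall t, in_interval a b t -> dot (dcurve i g t) (dcurve j g t) = f t) ->
  is_derive f s df ->
  dot (dcurve (S i) g s) (dcurve j g s) + dot (dcurve i g s) (dcurve (S j) g s) = df.
Proof.
intros Hs Hf Hdf.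
apply (is_derive_eq_on_interval a b _ f s _ _ Hs Hf); [|exact Hdf].
apply is_derive_dot; apply (is_derive3_dcurve a b); assumption.
Qed.

Lemma dot_tangent_tangent s : in_interval a b s ->
  dot (dcurve 1 g s) (dcurve 1 g s) = 1.
Proof. intro Hs. rewrite <- norm3_sqr, (g_arclength s Hs). ring. Qed.

Lemma dot_position_position s : in_interval a b s ->
  dot (dcurve 0 g s) (dcurve 0 g s) = (s + a0) ^ 2 + a1 ^ 2.
Proof. intro Hs. rewrite <- (g_norm s Hs), norm3_sqr. reflexivity. Qed.

Lemma dot_position_tangent s : in_interval a b s ->
  dot (dcurve 0 g s) (dcurve 1 g s) = s + a0.
Proof.
intro Hs.
assert (D : is_derive (fun t => (t + a0) ^ 2 + a1 ^ 2) s (2 * (s + a0)))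
  by (auto_derive; [easy|ring]).
assert (E := derive_dot_dcurve 0 0 _ s _ Hs dot_position_position D).
rewrite dot_comm in E. lra.
Qed.

Lemma dot_position_normal s : in_interval a b s ->
  dot (dcurve 0 g s) (dcurve 2 g s) = 0.
Proof.
intro Hs.
assert (D : is_derive (fun t => t + a0) s 1) by (auto_derive; [easy|ring]).
assert (E := derive_dot_dcurve 0 1 _ s _ Hs dot_position_tangent D).
rewrite dot_tangent_tangent in E by exact Hs. lra.
Qed.

Lemma dot_tangent_normal s : in_interval a b s ->
  dot (dcurve 1 g s) (dcurve 2 g s) = 0.
Proof.
intro Hs.
assert (D : is_derive (fun _ : R => 1) s 0)
  by exact (is_derive_const (V := R_NormedModule) 1 s).
assert (E := derive_dot_dcurve 1 1 _ s _ Hs dot_tangent_tangent D).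
rewrite dot_comm in E. lra.
Qed.

Lemma dot_normal_normal s : in_interval a b s ->
  dot (dcurve 2 g s) (dcurve 2 g s) = kappa0 ^ 2.
Proof.
intro Hs. rewrite <- (g_curvature s Hs). unfold curvature.
rewrite (g_arclength s Hs), pow1, Rdiv_1_r, norm3_sqr, dot_cross_self,
  dot_tangent_tangent, dot_tangent_normal by exact Hs.
ring.
Qed.

Lemma dot_cross_position_tangent s : in_interval a b s ->
  dot (cross (dcurve 0 g s) (dcurve 1 g s)) (cross (dcurve 0 g s) (dcurve 1 g s)) = a1 ^ 2.
Proof.
intro Hs.
rewrite dot_cross_self, dot_position_position, dot_tangent_tangent, dot_position_tangent
  by exact Hs.
ring.
Qed.

Lemma normal_eq_scal_cross s : in_interval a b s ->
  dcurve 2 g s = scal3 (dcurve_triple g s / a1 ^ 2) (cross (dcurve 0 g s) (dcurve 1 g s)).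
Proof.
intro Hs. rewrite <- (dot_cross_position_tangent s Hs).
apply orthogonal_eq_scal_cross.
- exact (dot_position_normal s Hs).
- exact (dot_tangent_normal s Hs).
- rewrite (dot_cross_position_tangent s Hs). apply pow_nonzero. lra.
Qed.

Lemma dcurve_triple_sqr s : in_interval a b s ->
  dcurve_triple g s ^ 2 = kappa0 ^ 2 * a1 ^ 2.
Proof.
intro Hs. unfold dcurve_triple.
assert (XT := dot_cross_position_tangent s Hs).
rewrite (triple_sqr_orthogonal _ _ _ (dot_position_normal s Hs) (dot_tangent_normal s Hs)),
  dot_normal_normal, XT by (exact Hs || rewrite XT; apply pow_nonzero; lra).
reflexivity.
Qed.

Lemma dcurve_triple_neq0 s : in_interval a b s -> dcurve_triple g s <> 0.
Proof.
intros Hs E.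
apply (Rmult_integral_contrapositive_currified (kappa0 ^ 2) (a1 ^ 2));
  try (apply pow_nonzero; lra).
rewrite <- (dcurve_triple_sqr s Hs), E. ring.
Qed.

Lemma dcurve_triple_const s1 s2 : in_interval a b s1 -> in_interval a b s2 ->
  dcurve_triple g s1 = dcurve_triple g s2.
Proof.
apply (sqr_const_nonzero_const_on_interval a b _ (kappa0 ^ 2 * a1 ^ 2)).
- intros t Ht. apply (ex_derive_triple _ _ _ t (dcurve 1 g t) (dcurve 2 g t) (dcurve 3 g t));
    apply (is_derive3_dcurve a b); assumption.
- exact dcurve_triple_sqr.
- apply Rmult_integral_contrapositive_currified; apply pow_nonzero; lra.
Qed.

End RadialNormCurve.

Theorem mainTheorem5 (a b : Rbar) (g : R -> R3) (kappa0 a0 a1 : R) :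
  Rbar_lt a b ->
  smooth_on a b g ->
  arclength_param a b g ->
  kappa0 <> 0 ->
  (forall s, in_interval a b s -> curvature g s = kappa0) ->
  0 < a1 ->
  (forall s, in_interval a b s -> (norm3 (g s)) ^ 2 = (s + a0) ^ 2 + a1 ^ 2) ->
  exists q : R, q <> 0 /\
    forall s, in_interval a b s ->
      dcurve 2 g s = scal3 q (cross (g s) (dcurve 1 g s)).
Proof.
intros Hab Hsm Har Hk0 Hcurv Ha1 Hnorm.
destruct (in_interval_nonempty a b Hab) as [s0 Hs0].
exists (dcurve_triple g s0 / a1 ^ 2). split.
- apply Rmult_integral_contrapositive_currified.
  + exact (dcurve_triple_neq0 a b g kappa0 a0 a1 Hsm Har Hcurv Hk0 Ha1 Hnorm s0 Hs0).
  + apply Rinv_neq_0_compat, pow_nonzero; lra.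
- intros s Hs.
  rewrite (dcurve_triple_const a b g kappa0 a0 a1 Hsm Har Hcurv Hk0 Ha1 Hnorm s0 s Hs0 Hs).
  exact (normal_eq_scal_cross a b g a0 a1 Hsm Har Ha1 Hnorm s Hs).
Qed.
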